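(* Let $p>r\geq2$ and let $A$ be a symmetric nonnegative $r$-matrix of order $n$ with no zero slices. If $\mathbf{x}\in\mathbb{R}^n$ is a nonnegative vector with $|\mathbf{x}|_p=1$ and $P_A(\mathbf{x})=\lambda^{(p)}(A)$, then $\mathbf{x}$ is positive.
   Context: A cubical $r$-matrix of order $n$ is a function $A$ on $[n]^r$ with entries $a_{i_1,\ldots,i_r}$; symmetric means invariant under permutations of indices. A slice of $A$ is the $(r-1)$-matrix obtained by fixing one index $i_k=s$; a zero slice is one all of whose entries are $0$. $P_A(\mathbf{x})=\sum a_{i_1,\ldots,i_r}x_{i_1}\cdots x_{i_r}$ and $\lambda^{(p)}(A)=\max\{P_A(\mathbf{x}):\mathbf{x}\in\mathbb{R}^n,\ |\mathbf{x}|_p=1\}$. *)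

From mathcomp Require Import all_boot all_order all_algebra all_fingroup.
From mathcomp Require Import all_classical all_reals all_analysis.
Set Implicit Arguments. Unset Strict Implicit. Unset Printing Implicit Defensive.
Import Order.TTheory GRing.Theory Num.Theory.
Local Open Scope ring_scope.
Local Open Scope classical_set_scope.

(* A cubical r-matrix of order n: a function on [n]^r, indices as
   finite functions 'I_r -> 'I_n (i.e. tuples (i_1,...,i_r)). *)
Definition rmatrix (R : realType) (r n : nat) := {ffun 'I_r -> 'I_n} -> R.

Definition symmetric_rmatrix (R : realType) r n (A : rmatrix R r n) : Prop :=
  forall (s : {perm 'I_r}) (i : {ffun 'I_r -> 'I_n}),
    A [ffun k => i (s k)] = A i.

Definition nonneg_rmatrix (R : realType) r n (A : rmatrix R r n) : Prop :=
  forall i, 0 <= A i.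

Definition zero_slice (R : realType) r n (A : rmatrix R r n)
  (k : 'I_r) (s : 'I_n) : Prop :=
  forall i : {ffun 'I_r -> 'I_n}, i k = s -> A i = 0.

Definition no_zero_slices (R : realType) r n (A : rmatrix R r n) : Prop :=
  forall k s, ~ zero_slice A k s.

Definition PA (R : realType) r n (A : rmatrix R r n) (x : 'I_n -> R) : R :=
  \sum_(i : {ffun 'I_r -> 'I_n}) A i * \prod_(k < r) x (i k).

Definition pnorm (R : realType) n (p : R) (x : 'I_n -> R) : R :=
  (\sum_(j < n) `|x j| `^ p) `^ p^-1.

Definition lambda_p (R : realType) r n (p : R) (A : rmatrix R r n) : R :=
  sup [set PA A x | x in [set x : 'I_n -> R | pnorm p x = 1]].

From mathcomp Require Import all_boot all_order all_algebra all_fingroup.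
From mathcomp Require Import all_classical all_reals all_analysis.
From mathcomp Require Import ring.
Set Implicit Arguments. Unset Strict Implicit. Unset Printing Implicit Defensive.
Import Order.TTheory GRing.Theory Num.Theory.
Local Open Scope ring_scope.

(* If x_j = 0, raise every coordinate of x to at least t > 0 and renormalise.
   Since no slice is zero, some entry a = A i0 > 0 has an index equal to j,
   so P_A gains at least a t^r, while the p-th power of the norm grows by at
   most n t^p and the renormalisation costs at most n t^p lambda.  As p > r,
   the gain wins for small t, contradicting the maximality of P_A(x). *)

Section PnormFacts.
Variables (R : realType) (n : nat) (p : R).
Hypothesis p_gt0 : 0 < p.

Lemma pnorm_powR (x : 'I_n -> R) :
  pnorm p x `^ p = \sum_(j < n) `|x j| `^ p.
Proof.
rewrite /pnorm -powRrM mulVf ?gt_eqF // powRr1 //.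
by apply: sumr_ge0 => *; exact: powR_ge0.
Qed.

Lemma pnorm1_sum (x : 'I_n -> R) :
  pnorm p x = 1 -> \sum_(j < n) `|x j| `^ p = 1.
Proof. by move=> nx; rewrite -pnorm_powR nx powR1. Qed.

Lemma pnorm1_normr_le1 (x : 'I_n -> R) (l : 'I_n) :
  pnorm p x = 1 -> `|x l| <= 1.
Proof.
move=> /pnorm1_sum hs.
have hl : `|x l| `^ p <= 1.
  rewrite -hs (bigD1 l) //= lerDl; apply: sumr_ge0 => *; exact: powR_ge0.
rewrite leNgt; apply/negP => hlt.
have := gt0_ltr_powR p_gt0 ler01 (normr_ge0 (x l)) hlt.
by rewrite powR1 ltNge hl.
Qed.

Lemma pnorm_normalize (y : 'I_n -> R) :
  (forall l, 0 <= y l) -> 0 < \sum_l y l `^ p ->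
  pnorm p (fun l => (\sum_l y l `^ p) `^ (- p^-1) * y l) = 1.
Proof.
set S := \sum_l y l `^ p => y_ge0 S_gt0; rewrite /pnorm.
have -> : \sum_(l < n) `|S `^ (- p^-1) * y l| `^ p = 1.
  rewrite -(mulfV (lt0r_neq0 S_gt0)) /S mulr_suml; apply: eq_bigr => l _.
  rewrite ger0_norm ?mulr_ge0 ?powR_ge0 // powRM ?powR_ge0 // mulrC.
  by rewrite -powRrM mulNr mulVf ?gt_eqF // powR_inv1 // ltW.
by rewrite powR1.
Qed.

Lemma sum_powR_le_max (x : 'I_n -> R) (t : R) : (forall l, 0 <= x l) ->
  \sum_l `|x l| `^ p <= \sum_l Num.max (x l) t `^ p.
Proof.
move=> x_ge0; apply: ler_sum => l _; rewrite ger0_norm //.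
have le_x_max : x l <= Num.max (x l) t by rewrite le_max lexx.
have max_ge0 := le_trans (x_ge0 l) le_x_max.
by apply: ge0_ler_powR; rewrite ?nnegrE // ltW.
Qed.

Lemma sum_powR_max_le (x : 'I_n -> R) (t : R) : (forall l, 0 <= x l) ->
  \sum_l Num.max (x l) t `^ p <= \sum_l `|x l| `^ p + n%:R * t `^ p.
Proof.
move=> x_ge0.
have -> : n%:R * t `^ p = \sum_(l < n) t `^ p by rewrite sumr_const card_ord mulr_natl.
rewrite -big_split /=.
apply: ler_sum => l _; rewrite ger0_norm // maxEle.
by case: ifP => _; rewrite ?lerDl ?lerDr powR_ge0.
Qed.

End PnormFacts.

Section PAFacts.
Variables (R : realType) (r n : nat) (A : rmatrix R r n).
Hypothesis A_ge0 : nonneg_rmatrix A.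

Lemma PAZ (c : R) (x : 'I_n -> R) :
  PA A (fun l => c * x l) = c ^+ r * PA A x.
Proof.
rewrite /PA mulr_sumr; apply: eq_bigr => i _.
by rewrite mulrCA big_split /= prodr_const card_ord.
Qed.

Lemma PA_ge0 (x : 'I_n -> R) : (forall l, 0 <= x l) -> 0 <= PA A x.
Proof.
move=> x_ge0; apply: sumr_ge0 => i _; apply: mulr_ge0; first exact: A_ge0.
by apply: prodr_ge0 => *; exact: x_ge0.
Qed.

Lemma PA_raise_slice (x y : 'I_n -> R) (t : R) (i0 : {ffun 'I_r -> 'I_n})
    (k : 'I_r) :
  (forall l, 0 <= x l) -> (forall l, x l <= y l) -> 0 <= t ->
  (forall l, t <= y l) -> x (i0 k) = 0 ->
  PA A x + A i0 * t ^+ r <= PA A y.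
Proof.
move=> x_ge0 le_xy t_ge0 le_ty x0.
rewrite /PA (bigD1 i0) //= [X in _ <= X](bigD1 i0) //=.
rewrite (bigD1 k) //= x0 mul0r mulr0 add0r addrC.
apply: lerD.
  apply: ler_sum => i _; apply: ler_wpM2l; first exact: A_ge0.
  by apply: ler_prod => l _; rewrite x_ge0 le_xy.
apply: ler_wpM2l; first exact: A_ge0.
rewrite -[in t ^+ r](card_ord r) -prodr_const.
by apply: ler_prod => l _; rewrite t_ge0 le_ty.
Qed.

Variable p : R.
Hypothesis p_gt0 : 0 < p.

Lemma has_ubound_PA_sphere :
  has_ubound [set PA A x | x in [set x : 'I_n -> R | pnorm p x = 1]].
Proof.
exists (\sum_i A i) => _ [v /= nv <-].
apply: ler_sum => i _; rewrite -[leRHS]mulr1; apply: ler_wpM2l; first exact: A_ge0.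
apply: le_trans (real_ler_norm _) _; first exact: num_real.
rewrite normr_prod; apply: prodr_ile1 => l _.
by rewrite normr_ge0 (pnorm1_normr_le1 p_gt0 _ nv).
Qed.

Lemma PA_le_lambda_p (x : 'I_n -> R) : pnorm p x = 1 -> PA A x <= lambda_p p A.
Proof.
move=> nx; apply: sup_upper_bound; last by exists x.
by split; [exists (PA A x), x | exact: has_ubound_PA_sphere].
Qed.

Lemma PA_le_sum_powR_lambda_p (y : 'I_n -> R) :
  r%:R <= p -> (forall l, 0 <= y l) -> 1 <= \sum_l y l `^ p ->
  PA A y <= (\sum_l y l `^ p) * lambda_p p A.
Proof.
set S := \sum_l y l `^ p => rp y_ge0 S_ge1.
have S_gt0 : 0 < S by apply: lt_le_trans S_ge1.
set w := fun l => S `^ (- p^-1) * y l.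
have w_le : PA A w <= lambda_p p A by apply/PA_le_lambda_p/pnorm_normalize.
have w_ge0 : 0 <= PA A w.
  by apply: PA_ge0 => l; rewrite mulr_ge0 ?powR_ge0.
have PAy : PA A y = S `^ (p^-1 * r%:R) * PA A w.
  rewrite /w PAZ mulrA -powR_mulrn ?powR_ge0 // -powRrM -powRD; last first.
    by rewrite (gt_eqF S_gt0) implybT.
  by rewrite mulNr addrN powRr0 mul1r.
rewrite PAy; apply: ler_pM => //; first exact: powR_ge0.
by apply: ler1_powR => //; rewrite ler_pdivrMl // mulr1.
Qed.

Lemma lambda_p_ge0 (x : 'I_n -> R) :
  (forall l, 0 <= x l) -> pnorm p x = 1 -> 0 <= lambda_p p A.
Proof. by move=> x_ge0 nx; apply: le_trans (PA_le_lambda_p nx); exact: PA_ge0. Qed.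

Lemma PA_perturb_le_lambda_p (x : 'I_n -> R) (t : R) (i0 : {ffun 'I_r -> 'I_n})
    (k : 'I_r) :
  r%:R <= p -> (forall l, 0 <= x l) -> pnorm p x = 1 -> x (i0 k) = 0 ->
  0 <= t -> PA A x + A i0 * t ^+ r <= (1 + n%:R * t `^ p) * lambda_p p A.
Proof.
move=> rp x_ge0 nx x_i0k t_ge0.
pose y l := Num.max (x l) t.
have le_xy l : x l <= y l by rewrite le_max lexx.
have le_ty l : t <= y l by rewrite le_max lexx orbT.
have y_ge0 l : 0 <= y l := le_trans t_ge0 (le_ty l).
have sum_x := pnorm1_sum p_gt0 nx.
have S_ge1 : 1 <= \sum_l y l `^ p by rewrite -sum_x sum_powR_le_max.
have S_le : \sum_l y l `^ p <= 1 + n%:R * t `^ p.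
  by rewrite -{1}sum_x; apply: sum_powR_max_le.
apply: le_trans (PA_raise_slice x_ge0 le_xy t_ge0 le_ty x_i0k) _.
apply: le_trans (PA_le_sum_powR_lambda_p rp y_ge0 S_ge1) _.
by rewrite ler_wpM2r // (lambda_p_ge0 x_ge0 nx).
Qed.

End PAFacts.

Lemma exists_small_powR (R : realType) (q c e : R) :
  0 < q -> 0 <= c -> 0 < e -> exists2 t, 0 < t & c * t `^ q < e.
Proof.
move=> q_gt0 c_ge0 e_gt0; have c1_gt0 : 0 < c + 1 by rewrite ltr_wpDl.
have d_gt0 : 0 < e / (c + 1) by rewrite divr_gt0.
exists ((e / (c + 1)) `^ q^-1); first exact: powR_gt0.
rewrite -powRrM mulVf ?gt_eqF // powRr1 ?ltW // mulrA ltr_pdivrMr //.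
by rewrite mulrC ltr_pM2l // ltrDl.
Qed.

Theorem corollary12 (R : realType) (r n : nat) (p : R)
  (A : rmatrix R r n) (x : 'I_n -> R) :
  (2 <= r)%N -> r%:R < p ->
  symmetric_rmatrix A -> nonneg_rmatrix A -> no_zero_slices A ->
  (forall j, 0 <= x j) -> pnorm p x = 1 -> PA A x = lambda_p p A ->
  forall j, 0 < x j.
Proof.
move=> r_ge2 rp _ A_ge0 A_nzs x_ge0 nx PAx j.
rewrite lt_neqAle x_ge0 andbT eq_sym; apply/negP => /eqP xj0.
have p_gt0 : 0 < p by apply: le_lt_trans rp.
pose k : 'I_r := Ordinal (ltnW r_ge2).
have /existsNP [i0 /not_implyP [i0k Ai0_neq0]] := A_nzs k j.
have a_gt0 : 0 < A i0 by rewrite lt_def A_ge0 andbT; apply/eqP.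
have lam_ge0 := lambda_p_ge0 A_ge0 p_gt0 x_ge0 nx.
have pr_gt0 : 0 < p - r%:R by rewrite subr_gt0.
have [t t_gt0 small_t] :=
  exists_small_powR pr_gt0 (mulr_ge0 (ler0n _ n) lam_ge0) a_gt0.
have x_i0k : x (i0 k) = 0 by rewrite i0k.
have bound := PA_perturb_le_lambda_p A_ge0 p_gt0 (ltW rp) x_ge0 nx x_i0k (ltW t_gt0).
have tp : t `^ p = t ^+ r * t `^ (p - r%:R).
  by rewrite -powR_mulrn ?ltW // -powRD ?(gt_eqF t_gt0) ?implybT // subrKC.
have : A i0 * t ^+ r <= t ^+ r * (n%:R * lambda_p p A * t `^ (p - r%:R)).
  rewrite -(lerD2l (PA A x)); apply: le_trans bound _.
  by rewrite PAx tp le_eqVlt; apply/orP; left; apply/eqP; ring.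
by rewrite mulrC ler_pM2l ?exprn_gt0 // leNgt small_t.
Qed.
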